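(* Let $\mathcal{X}\subseteq\{0,1\}^n$ be a nonempty set of feasible solutions, let $\hat c\in\mathbb{R}^n_{\ge 0}$ be the nominal cost vector, and for $\lambda\in\Lambda\subseteq[0,1]$ let $\mathcal{U}(\lambda)=\prod_{i=1}^n[(1-\lambda)\hat c_i,(1+\lambda)\hat c_i]$. Let $w:\Lambda\to\mathbb{R}_{\ge 0}$ be a weight function such that \[ val(x)=\int_\Lambda w(\lambda)\Big(\max_{c\in\mathcal{U}(\lambda)} c^t x\Big)\,d\lambda \] is well-defined (finite) for all $x\in\mathcal{X}$. Then any nominal solution $\hat x$, i.e. any minimizer of $\hat c^t x$ over $x\in\mathcal{X}$, is an optimal solution of the problem $\min_{x\in\mathcal{X}} val(x)$.
   Context: This is the ''compromise approach to variable-sized uncertainty'' for min-max robust combinatorial optimization: the nominal problem is $\min\{c^tx : x\in\mathcal{X}\}$, the uncertainty set $\mathcal{U}(\lambda)$ has known shape but unknown size $\lambda$, and one seeks a single solution minimizing the $w$-weighted integral over $\lambda$ of the worst-case objective. *)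

From HB Require Import structures.
From mathcomp Require Import all_boot all_order all_algebra.
From mathcomp Require Import all_classical all_reals all_analysis.
Set Implicit Arguments. Unset Strict Implicit. Unset Printing Implicit Defensive.
Import Order.TTheory GRing.Theory Num.Theory.
Local Open Scope classical_set_scope.
Local Open Scope ring_scope.

Definition cost {R : realType} {n : nat} (c : 'I_n -> R) (x : 'I_n -> bool) : R :=
  \sum_(i < n) c i * (x i)%:R.

Definition Uset {R : realType} {n : nat} (chat : 'I_n -> R) (l : R) : set ('I_n -> R) :=
  [set c | forall i, (1 - l) * chat i <= c i <= (1 + l) * chat i].

Definition worst_case {R : realType} {n : nat} (chat : 'I_n -> R)
    (x : 'I_n -> bool) (l : R) : R :=
  sup [set cost c x | c in Uset chat l].

Definition cval {R : realType} {n : nat} (Lam : set R) (w : R -> R)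
    (chat : 'I_n -> R) (x : 'I_n -> bool) : \bar R :=
  (\int[@lebesgue_measure R]_(l in Lam) (w l * worst_case chat x l)%:E)%E.

From HB Require Import structures.
From mathcomp Require Import all_boot all_order all_algebra.
From mathcomp Require Import all_classical all_reals all_analysis.
From mathcomp Require Import lra.
Import Order.TTheory GRing.Theory Num.Theory.
Local Open Scope classical_set_scope.
Local Open Scope ring_scope.

(* Since x >= 0 and the box U(l) has the upper corner (1 + l) chat, the worst
   case over U(l) is (1 + l) chat^t x.  The integrand of val(x) is therefore
   w(l) (1 + l) chat^t x, which for nonnegative weights is pointwise monotone
   in the nominal cost chat^t x, and monotonicity of the integral concludes. *)

Section WorstCase.
Variables (R : realType) (n : nat).
Implicit Types (c : 'I_n -> R) (x : 'I_n -> bool).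

Lemma costZ (a : R) c x : cost (fun i => a * c i) x = a * cost c x.
Proof. by rewrite /cost mulr_sumr; apply: eq_bigr => i _; rewrite mulrA. Qed.

Lemma ler_cost c (c' : 'I_n -> R) x :
  (forall i, c i <= c' i) -> cost c x <= cost c' x.
Proof.
move=> lecc'; apply: ler_sum => i _.
by apply: ler_wpM2r; [case: (x i) | exact: lecc'].
Qed.

Lemma worst_caseE (chat : 'I_n -> R) x (l : R) :
  (forall i, 0 <= chat i) -> 0 <= l ->
  worst_case chat x l = (1 + l) * cost chat x.
Proof.
move=> chat_ge0 l_ge0.
set S := [set cost c x | c in Uset chat l].
have S_corner : S ((1 + l) * cost chat x).
  exists (fun i => (1 + l) * chat i); last exact: costZ.
  move=> i; rewrite lexx andbT.
  by apply: ler_wpM2r => //; lra.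
have S_ub : ubound S ((1 + l) * cost chat x).
  move=> _ [c cU <-]; rewrite -costZ; apply: ler_cost => i.
  by case/andP: (cU i).
apply/eqP; rewrite eq_le ge_sup ?ub_le_sup //; last by exists ((1 + l) * cost chat x).
by exists ((1 + l) * cost chat x).
Qed.

Lemma le_worst_case (chat : 'I_n -> R) x x' (l : R) :
  (forall i, 0 <= chat i) -> 0 <= l ->
  cost chat x <= cost chat x' -> worst_case chat x l <= worst_case chat x' l.
Proof.
move=> chat_ge0 l_ge0 lexx'.
by rewrite !worst_caseE //; apply: ler_wpM2l => //; lra.
Qed.

End WorstCase.

Theorem theorem1 (R : realType) (n : nat) (X : set ('I_n -> bool))
  (chat : 'I_n -> R) (Lam : set R) (w : R -> R) (xhat : 'I_n -> bool) :
  X !=set0 ->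
  (forall i, 0 <= chat i) ->
  measurable Lam ->
  Lam `<=` `[0, 1] ->
  (forall l, Lam l -> 0 <= w l) ->
  (forall x, X x ->
     (@lebesgue_measure R).-integrable Lam
       (fun l => (w l * worst_case chat x l)%:E)) ->
  X xhat ->
  (forall x, X x -> cost chat xhat <= cost chat x) ->
  forall x, X x -> (cval Lam w chat xhat <= cval Lam w chat x)%E.
Proof.
move=> _ chat_ge0 mLam Lam01 w_ge0 integrable_val Xxhat xhat_min x Xx.
apply: le_integral => //; [exact: integrable_val | exact: integrable_val |].
move=> l /[!inE] Lam_l.
have /andP[l_ge0 _] : 0 <= l <= 1 by have := Lam01 _ Lam_l; rewrite /= in_itv.
rewrite lee_fin; apply: ler_wpM2l; first exact: w_ge0.
exact: le_worst_case (xhat_min _ Xx).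
Qed.
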